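(* Let $R$ be a commutative ring with identity and $S$ a multiplicative subset of $R$. Then $R$ is uniformly $S$-von Neumann regular if and only if every $R$-module is $u$-$S$-absolutely pure.
   Context: A multiplicative subset $S$ satisfies $1\in S$ and is closed under products. $R$ is uniformly $S$-von Neumann regular if there exists $s\in S$ such that for every $a\in R$ there is $r\in R$ with $sa=ra^2$. A short sequence $0\to A\xrightarrow{f}B\xrightarrow{g}C\to 0$ is $u$-$S$-exact if there is $s\in S$ with $s\,\mathrm{Ker}(f)=0$, $s\,\mathrm{Ker}(g)\subseteq\mathrm{Im}(f)$, $s\,\mathrm{Im}(f)\subseteq\mathrm{Ker}(g)$, $sC\subseteq\mathrm{Im}(g)$; it is $u$-$S$-pure if tensoring with any $R$-module gives a short $u$-$S$-exact sequence. An $R$-module $E$ is $u$-$S$-absolutely pure if every short $u$-$S$-exact sequence $0\to E\to B\to C\to 0$ beginning with $E$ is $u$-$S$-pure. *)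

From HB Require Import structures.
From mathcomp Require Import all_boot all_order all_algebra.
Set Implicit Arguments. Unset Strict Implicit. Unset Printing Implicit Defensive.
Import GRing.Theory.
Local Open Scope ring_scope.

Definition multiplicative_subset (R : comPzRingType) (S : {pred R}) : Prop :=
  1 \in S /\ (forall a b, a \in S -> b \in S -> a * b \in S).

Definition uniformly_S_vNr (R : comPzRingType) (S : {pred R}) : Prop :=
  exists2 s, s \in S & forall a : R, exists r : R, s * a = r * a ^+ 2.

Definition uS_exact (R : comPzRingType) (S : {pred R}) (A B C : lmodType R)
  (f : {linear A -> B}) (g : {linear B -> C}) : Prop :=
  exists2 s, s \in S &
    [/\ forall a, f a = 0 -> s *: a = 0,
        forall b, g b = 0 -> exists a, f a = s *: b,
        forall a, g (s *: f a) = 0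
      & forall c, exists b, g b = s *: c].

(* Tensor product A (x)_R N, concretely: an element is a formal finite sum of
   simple tensors a (x) n, represented by a list of pairs, and two formal sums
   represent the same element iff they are related by the smallest congruence
   (for concatenation = addition, which is commutative) generated by the
   bilinearity / balancing relations. *)
Inductive teq (R : comPzRingType) (A N : lmodType R) :
    seq (A * N) -> seq (A * N) -> Prop :=
| teq_refl t : teq t t
| teq_sym t u : teq t u -> teq u t
| teq_trans t u v : teq t u -> teq u v -> teq t v
| teq_cat t1 t2 u1 u2 : teq t1 u1 -> teq t2 u2 -> teq (t1 ++ t2) (u1 ++ u2)
| teq_swap t u : teq (t ++ u) (u ++ t)
| teq_addl (a a' : A) (n : N) : teq [:: (a + a', n)] [:: (a, n); (a', n)]
| teq_addr (a : A) (n n' : N) : teq [:: (a, n + n')] [:: (a, n); (a, n')]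
| teq_scale (r : R) (a : A) (n : N) : teq [:: (r *: a, n)] [:: (a, r *: n)]
| teq_zero (n : N) : teq [:: (0, n)] [::].

Definition tmap (R : comPzRingType) (A B N : lmodType R) (f : A -> B)
  (t : seq (A * N)) : seq (B * N) := map (fun p => (f p.1, p.2)) t.

Definition tscale (R : comPzRingType) (A N : lmodType R) (r : R)
  (t : seq (A * N)) : seq (A * N) := map (fun p => (r *: p.1, p.2)) t.

Definition uS_exact_tensor (R : comPzRingType) (S : {pred R}) (A B C : lmodType R)
  (f : {linear A -> B}) (g : {linear B -> C}) (N : lmodType R) : Prop :=
  exists2 s, s \in S &
    [/\ forall t : seq (A * N), teq (tmap f t) [::] -> teq (tscale s t) [::],
        forall u : seq (B * N), teq (tmap g u) [::] ->
          exists t : seq (A * N), teq (tmap f t) (tscale s u),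
        forall t : seq (A * N), teq (tmap g (tscale s (tmap f t))) [::]
      & forall w : seq (C * N), exists u : seq (B * N), teq (tmap g u) (tscale s w)].

Definition uS_pure (R : comPzRingType) (S : {pred R}) (A B C : lmodType R)
  (f : {linear A -> B}) (g : {linear B -> C}) : Prop :=
  forall N : lmodType R, uS_exact_tensor S f g N.

Definition uS_absolutely_pure (R : comPzRingType) (S : {pred R}) (E : lmodType R) : Prop :=
  forall (B C : lmodType R) (f : {linear E -> B}) (g : {linear B -> C}),
    uS_exact S f g -> uS_pure S f g.

(* Forward: if s a = r a^2 for all a, then e := r^3 s^3 (with s^3 = r s^4) is an
   idempotent with s^3 e = s^3 such that eR is von Neumann regular.  Over eR every
   finite linear system with right-hand sides in f(E) that is solvable in B becomes,
   after multiplication by e, solvable in E: eliminate one unknown at a time using an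
   idempotent local unit of its coefficients.  An element of E (x) N vanishes iff its
   coefficient vector in E^(N) is an E-combination of relations between elements of N,
   so the kernel of f (x) N is killed by s^3 s1; the other three conditions come from
   right exactness of the tensor product.
   Backward: tensor 0 -> prod_b bR -> R^R -> prod_b R/bR -> 0 with prod_b R/bR.  For a
   fixed a, the pairing x (x) n |-> x_a n_a is well defined modulo a^2, and the tensor
   of the a-th unit vectors is killed by f (x) 1, hence by s; its pairing then says
   that s a is a multiple of a^2. *)

From HB Require Import structures.
From mathcomp Require Import all_boot all_order all_algebra ring.
From mathcomp Require Import boolp functions.
Import GRing.Theory.
Local Open Scope ring_scope.
Set Implicit Arguments. Unset Strict Implicit. Unset Printing Implicit Defensive.

Definition seq_coef (V : zmodType) (T : eqType) (t : seq (V * T)) (n : T) : V :=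
  \sum_(p <- t | p.2 == n) p.1.

Lemma seq_coef_nil (V : zmodType) (T : eqType) (n : T) : seq_coef ([::] : seq (V * T)) n = 0.
Proof. by rewrite /seq_coef big_nil. Qed.

Lemma seq_coef_cons (V : zmodType) (T : eqType) (p : V * T) t n :
  seq_coef (p :: t) n = p.1 *+ (p.2 == n) + seq_coef t n.
Proof. by rewrite /seq_coef big_cons; case: eqP; rewrite ?add0r. Qed.

Lemma seq_coef_cat (V : zmodType) (T : eqType) (t u : seq (V * T)) n :
  seq_coef (t ++ u) n = seq_coef t n + seq_coef u n.
Proof. by rewrite /seq_coef big_cat. Qed.

Definition linear_relation (R : comPzRingType) (N : lmodType R) (rel : seq (R * N)) : Prop :=
  \sum_(q <- rel) q.1 *: q.2 = 0.

Section TensorRelation.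
Variables (R : comPzRingType) (A N : lmodType R).
Local Notation teq := (@teq R A N).
Implicit Types (t u v : seq (A * N)) (a : A) (n : N) (rel : seq (R * N)).

Lemma teq_catl t u v : teq t u -> teq (t ++ v) (u ++ v).
Proof. by move=> tu; apply: teq_cat => //; apply: teq_refl. Qed.

Lemma teq_catr t u v : teq t u -> teq (v ++ t) (v ++ u).
Proof. by move=> tu; apply: teq_cat => //; apply: teq_refl. Qed.

Lemma teq_perm t u : perm_eq t u -> teq t u.
Proof.
elim: t u => [|p t IH] u; first by rewrite perm_sym => /perm_nilP ->; apply: teq_refl.
move=> ptu; have pu : p \in u by rewrite -(perm_mem ptu) mem_head.
move: ptu; case/splitPr: pu => u1 u2 ptu; have tu : perm_eq t (u1 ++ u2).
  by rewrite -(perm_cons p); apply: perm_trans ptu _; rewrite -cat1s perm_catCA.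
apply: teq_trans (@teq_catr _ _ [:: p] (IH _ tu)) _.
rewrite -[p :: u2]cat1s !catA.
by apply: teq_catl; apply: teq_swap.
Qed.

Lemma teq_map (X : Type) (F G : X -> A * N) (xs : seq X) :
  (forall x, teq [:: F x] [:: G x]) -> teq (map F xs) (map G xs).
Proof.
move=> FG; elim: xs => [|x xs IH] /=; first exact: teq_refl.
exact: (teq_cat (t1 := [:: F x]) (u1 := [:: G x])).
Qed.

Lemma teq_zeror a : teq [:: (a, 0)] [::].
Proof.
rewrite -(scale0r 0 : (0 : R) *: (0 : N) = 0).
by apply: teq_trans (teq_sym (teq_scale _ _ _)) _; rewrite scale0r; apply: teq_zero.
Qed.

Lemma teq_all_zero t : (forall p, p \in t -> p.1 = 0) -> teq t [::].
Proof.
elim: t => [|[a n] t IH] t0; first exact: teq_refl.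
rewrite -cat1s -[[::]]/([::] ++ [::]); apply: teq_cat.
  by rewrite [a](t0 (a, n) (mem_head _ _)); apply: teq_zero.
by apply: IH => p pt; apply: t0; rewrite inE pt orbT.
Qed.

Lemma teq_mapD (X : Type) (F G : X -> A) (k : X -> N) (xs : seq X) :
  teq [seq (F x + G x, k x) | x <- xs]
      ([seq (F x, k x) | x <- xs] ++ [seq (G x, k x) | x <- xs]).
Proof.
elim: xs => [|x xs IH] /=; first exact: teq_refl.
apply: teq_trans (teq_cat (teq_addl (F x) (G x) (k x)) IH) _.
by apply: teq_perm; rewrite /= perm_cons -cat1s perm_catCA.
Qed.

Lemma teq_sumr a (X : Type) (F : X -> N) (xs : seq X) :
  teq [seq (a, F x) | x <- xs] [:: (a, \sum_(x <- xs) F x)].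
Proof.
elim: xs => [|x xs IH] /=; first by rewrite big_nil; apply/teq_sym/teq_zeror.
rewrite big_cons; apply: teq_trans (teq_sym (teq_addr _ _ _)).
exact: (@teq_catr _ _ [:: (a, F x)] IH).
Qed.

Lemma teq_coef_single a n (G : seq N) : uniq G -> n \in G ->
  teq [seq (a *+ (n == m), m) | m <- G] [:: (a, n)].
Proof.
elim: G => [|m G IH] //= /andP[mG uG]; rewrite inE.
have [-> _ | nm /= nG] := eqVneq n m.
  rewrite mulr1n -[_ :: _]cat1s -[[:: _]]cats0; apply: teq_catr; apply: teq_all_zero.
  move=> _ /mapP[k kG ->] /=; case: eqVneq => [mk|_]; last exact: mulr0n.
  by rewrite mk kG in mG.
rewrite mulr0n -[_ :: _]cat1s -[[:: (a, n)]]cat0s.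
by apply: teq_cat; [apply: teq_zero | apply: IH].
Qed.

Lemma teq_coef t (G : seq N) : uniq G -> {subset map snd t <= G} ->
  teq t [seq (seq_coef t n, n) | n <- G].
Proof.
move=> uG; elim: t => [|p t IH] tG.
  by apply/teq_sym/teq_all_zero => _ /mapP[n _ ->]; apply: seq_coef_nil.
under eq_map do rewrite seq_coef_cons.
apply/teq_sym; apply: teq_trans (teq_mapD _ _ _ _) _; rewrite -cat1s.
apply: teq_cat; last by apply/teq_sym/IH => n nt; apply: tG; rewrite inE nt orbT.
by case: p tG => a n tG; apply: teq_coef_single => //; apply: tG; rewrite mem_head.
Qed.

Implicit Types (fam : seq (A * seq (R * N))).

Definition relation_family fam : Prop := forall p, p \in fam -> linear_relation p.2.

Definition fam_coef fam n : A := \sum_(p <- fam) seq_coef p.2 n *: p.1.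

Definition fam_supp fam : seq N := flatten [seq map snd p.2 | p <- fam].

Lemma sum_seq_coef rel (G : seq N) : uniq G -> {subset map snd rel <= G} ->
  \sum_(m <- G) seq_coef rel m *: m = \sum_(q <- rel) q.1 *: q.2.
Proof.
move=> uG; elim: rel => [|[r n] rel IH] relG.
  by rewrite big_nil big1 // => m _; rewrite seq_coef_nil scale0r.
under eq_bigr do rewrite seq_coef_cons scalerDl.
rewrite big_split big_cons -IH /=; last by move=> m mrel; apply: relG; rewrite inE mrel orbT.
congr (_ + _); rewrite (bigD1_seq n) ?relG ?mem_head //= eqxx mulr1n big1 ?addr0 // => m nm.
by rewrite eq_sym (negbTE nm) mulr0n scale0r.
Qed.

Lemma teq_linear_relation_nil rel a (G : seq N) : linear_relation rel -> uniq G ->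
  {subset map snd rel <= G} -> teq [seq (seq_coef rel m *: a, m) | m <- G] [::].
Proof.
move=> relP uG relG.
apply: teq_trans (teq_map (G := fun m => (a, seq_coef rel m *: m)) _ _) _.
  by move=> m; apply: teq_scale.
by apply: teq_trans (teq_sumr _ _ _) _; rewrite sum_seq_coef // relP; apply: teq_zeror.
Qed.

Lemma teq_fam_coef_nil fam (G : seq N) : relation_family fam -> uniq G ->
  {subset fam_supp fam <= G} -> teq [seq (fam_coef fam m, m) | m <- G] [::].
Proof.
move=> + uG; elim: fam => [|p fam IH] famP famG.
  by apply: teq_all_zero => _ /mapP[m _ ->]; rewrite /fam_coef big_nil.
rewrite /fam_coef; under eq_map do rewrite big_cons.
apply: teq_trans (teq_mapD _ _ _ _) _; rewrite -[[::]]cat0s; apply: teq_cat.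
  apply: teq_linear_relation_nil => //; first by apply: famP; rewrite mem_head.
  by move=> n np; apply: famG; rewrite /fam_supp /= mem_cat np.
apply: IH => [q qfam|n nfam]; first by apply: famP; rewrite inE qfam orbT.
by apply: famG; rewrite /fam_supp /= mem_cat nfam orbT.
Qed.

Lemma fam_coefZ r fam n :
  fam_coef [seq (r *: p.1, p.2) | p <- fam] n = r *: fam_coef fam n.
Proof.
by rewrite /fam_coef big_map scaler_sumr; apply: eq_bigr => p _; rewrite !scalerA mulrC.
Qed.

Lemma relation_familyZ r fam :
  relation_family fam -> relation_family [seq (r *: p.1, p.2) | p <- fam].
Proof. by move=> famP _ /mapP[p pfam ->]; apply: famP pfam. Qed.

Lemma fam_suppZ r fam : fam_supp [seq (r *: p.1, p.2) | p <- fam] = fam_supp fam.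
Proof. by rewrite /fam_supp -map_comp. Qed.

(* Together with teq_fam_coef_nil: A (x) N is A^(N), read through seq_coef, modulo the
   image of A (x) K, where K is the module of relations between elements of N. *)
Lemma teq_coef_relations t u : teq t u -> exists2 fam,
  relation_family fam & forall n, seq_coef t n - seq_coef u n = fam_coef fam n.
Proof.
have fam_coef_nil n : fam_coef [::] n = 0 by rewrite /fam_coef big_nil.
have fam_coef_cat f1 f2 n : fam_coef (f1 ++ f2) n = fam_coef f1 n + fam_coef f2 n.
  by rewrite /fam_coef big_cat.
have fam_coef1 a rel n : fam_coef [:: (a, rel)] n = seq_coef rel n *: a.
  by rewrite /fam_coef big_seq1.
have natE (b : bool) a : a *+ b = (b%:R : R) *: a by rewrite scaler_nat.
elim=> {t u}.
- by move=> t; exists [::] => // n; rewrite subrr fam_coef_nil.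
- move=> t u _ [fam famP tu]; exists [seq ((-1) *: p.1, p.2) | p <- fam].
    exact: relation_familyZ.
  by move=> n; rewrite fam_coefZ scaleN1r -tu opprB.
- move=> t u v _ [f1 f1P tu] _ [f2 f2P uv]; exists (f1 ++ f2).
    by move=> p; rewrite mem_cat => /orP[/f1P|/f2P].
  by move=> n; rewrite fam_coef_cat -tu -uv addrA subrK.
- move=> t1 t2 u1 u2 _ [f1 f1P tu1] _ [f2 f2P tu2]; exists (f1 ++ f2).
    by move=> p; rewrite mem_cat => /orP[/f1P|/f2P].
  by move=> n; rewrite fam_coef_cat -tu1 -tu2 !seq_coef_cat opprD addrACA.
- move=> t u; exists [::] => // n.
  by rewrite !seq_coef_cat [seq_coef u n + _]addrC subrr fam_coef_nil.
- move=> a a' n; exists [::] => // m.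
  by rewrite !seq_coef_cons !seq_coef_nil mulrnDl !addr0 subrr fam_coef_nil.
- move=> a n n'; exists [:: (a, [:: (1, n + n'); (-1, n); (-1, n')])].
    move=> _ /[!inE] /eqP -> /=.
    by rewrite /linear_relation !big_cons big_nil /= scale1r !scaleN1r addr0 -opprD subrr.
  move=> m; rewrite fam_coef1 !seq_coef_cons !seq_coef_nil /= !addr0 !natE.
  rewrite -!scalerDl -scalerBl.
  by congr (_ *: _); ring.
- move=> r a n; exists [:: (a, [:: (r, n); (-1, r *: n)])].
    move=> _ /[!inE] /eqP -> /=.
    by rewrite /linear_relation !big_cons big_nil /= scaleN1r addr0 subrr.
  move=> m; rewrite fam_coef1 !seq_coef_cons !seq_coef_nil /= !addr0 !natE scalerA -scalerBl.
  by congr (_ *: _); ring.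
- move=> n; exists [::] => // m.
  by rewrite !seq_coef_cons !seq_coef_nil mul0rn !addr0 subrr fam_coef_nil.
Qed.

End TensorRelation.

Section TensorMaps.
Variables (R : comPzRingType) (A B N : lmodType R).
Implicit Types (t : seq (A * N)) (n : N).

Lemma seq_coef_tmap (f : {linear A -> B}) t n : seq_coef (tmap f t) n = f (seq_coef t n).
Proof.
rewrite /seq_coef big_map (linear_sum f) big_mkcond [RHS]big_mkcond.
by apply: eq_bigr => p _ /=; case: ifP; rewrite ?linear0.
Qed.

Lemma seq_coef_tscale (r : R) t n : seq_coef (tscale r t) n = r *: seq_coef t n.
Proof. by rewrite /seq_coef big_map scaler_sumr. Qed.

Lemma map_snd_tscale (r : R) t : map snd (tscale r t) = map snd t.
Proof. by rewrite -map_comp. Qed.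

End TensorMaps.

Lemma uniform_vNr_idempotent (R : comPzRingType) (s : R) :
  (forall a : R, exists r, s * a = r * a ^+ 2) ->
  exists e : R, [/\ e * e = e, s ^+ 3 * e = s ^+ 3
                  & forall x, exists rho, rho * (e * x) ^+ 2 = e * x].
Proof.
move=> sreg; have [r sr] := sreg (s ^+ 2).
have s3E : s ^+ 3 = r * s * s ^+ 3 by rewrite [LHS](exprS s 2) sr; ring.
have s3e : (r * s) ^+ 3 * s ^+ 3 = s ^+ 3.
  by transitivity (r * s * (r * s * (r * s * s ^+ 3))); [ring | rewrite -!s3E].
exists (r ^+ 3 * s ^+ 3); split.
- by transitivity (r ^+ 3 * ((r * s) ^+ 3 * s ^+ 3)); [ring | rewrite s3e].
- by rewrite -[RHS]s3e; ring.
move=> x; have [rx srx] := sreg x.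
exists (r ^+ 6 * s ^+ 5 * rx).
transitivity (r ^+ 12 * s ^+ 11 * (rx * x ^+ 2)); first by ring.
rewrite -srx.
transitivity (r ^+ 3 * ((r * s) ^+ 3 * ((r * s) ^+ 3 * ((r * s) ^+ 3 * s ^+ 3))) * x).
  by ring.
by rewrite !s3e.
Qed.

Section RegularIdempotent.
Variables (R : comPzRingType) (e : R).
Hypothesis ee : e * e = e.
Hypothesis e_regular : forall x : R, exists rho, rho * (e * x) ^+ 2 = e * x.

Lemma local_unit (m : nat) (x : nat -> R) : exists alpha : nat -> R,
  let eps := \sum_(0 <= j < m) alpha j * x j in
  (forall i, (i < m)%N -> eps * x i = e * x i) /\ e * eps = eps.
Proof.
elim: m => [|m [alpha /= [epsx eeps]]].
  by exists (fun _ => 0); split => //; rewrite big_geq // mulr0.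
set eps := \sum_(0 <= j < m) _ in epsx eeps.
have [rho rhoP] := e_regular (x m).
have rhoE : rho * e * x m * x m = e * x m.
  by rewrite -rhoP -{1}ee; ring.
exists (fun j => if j == m then rho * e * (1 - eps) else alpha j) => /=.
rewrite big_nat_recr //= eqxx big_nat_cond.
under eq_bigr => j /andP[/andP[_ jm] _] do rewrite ltn_eqF //.
rewrite -big_nat_cond -/eps; split.
  move=> i; rewrite ltnS leq_eqVlt => /orP[/eqP ->|im].
    transitivity (eps * x m + (1 - eps) * (rho * e * x m * x m)); first by ring.
    by rewrite rhoE -{1}eeps; ring.
  transitivity (eps * x i + rho * x m * (x i - eps * x i) * e); first by ring.
  rewrite epsx //; transitivity (e * x i + rho * x m * x i * (e - e * e)); first by ring.
  by rewrite ee subrr mulr0 addr0.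
rewrite mulrDr eeps; congr (_ + _).
by transitivity (rho * (e * e) * (1 - eps) * x m); [ring | rewrite ee].
Qed.

Lemma sum_scale_comb (M : lmodType R) n (a b : nat -> R) (y : R) (v : nat -> M) :
  \sum_(0 <= l < n) (e * (a l - y * b l)) *: v l =
  e *: (\sum_(0 <= l < n) a l *: v l - y *: \sum_(0 <= l < n) b l *: v l).
Proof.
rewrite (scaler_sumr y) -sumrB scaler_sumr; apply: eq_bigr => l _.
by rewrite -scalerA scalerBl -scalerA.
Qed.

Lemma linear_system_lift (E B : lmodType R) (f : {linear E -> B}) (n : nat) :
  forall (m : nat) (K : nat -> nat -> R) (c : nat -> E) (w : nat -> B),
  (forall i, (i < m)%N -> \sum_(0 <= l < n) K i l *: w l = f (c i)) ->
  exists W : nat -> E, forall i, (i < m)%N ->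
    f (\sum_(0 <= l < n) K i l *: W l) = e *: f (c i).
Proof.
(* Eliminate the unknown w 0 with a local unit eps of its coefficients x i, then recurse. *)
elim: n => [|n IH] m K c w sys.
  by exists (fun _ => 0) => i im; rewrite -(sys i im) !big_geq // linear0 scaler0.
pose x i := K i 0%N.
have [alpha /= [epsx eeps]] := local_unit m x.
set eps := \sum_(0 <= j < m) _ in epsx eeps.
pose C := \sum_(0 <= j < m) alpha j *: c j.
pose Al l := \sum_(0 <= j < m) alpha j * K j l.+1.
have sys_tail i : (i < m)%N ->
    \sum_(0 <= l < n) K i l.+1 *: w l.+1 = f (c i) - x i *: w 0%N.
  by move=> im; rewrite -(sys i im) big_nat_recl // addrAC subrr add0r.
have comb : \sum_(0 <= l < n) Al l *: w l.+1 = f C - eps *: w 0%N.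
  under eq_bigr do rewrite scaler_suml.
  rewrite exchange_big /= (linear_sum f) scaler_suml -sumrB.
  apply: eq_big_nat => j /andP[_ jm].
  rewrite (linearZZ f) -scalerA -scalerBr -sys_tail // scaler_sumr.
  by apply: eq_bigr => l _; rewrite scalerA.
pose K' i l := e * (K i l.+1 - x i * Al l).
pose c' i := e *: (c i - x i *: C).
have sys' i : (i < m)%N -> \sum_(0 <= l < n) K' i l *: w l.+1 = f (c' i).
  move=> im; rewrite sum_scale_comb sys_tail // comb.
  rewrite /c' (linearZZ f) (linearB f) (linearZZ f).
  have -> : x i *: (f C - eps *: w 0%N) = x i *: f C - e *: (x i *: w 0%N).
    by rewrite scalerBr scalerA -epsx // scalerA mulrC.
  rewrite opprB addrCA scalerDr scalerA ee -scalerDr.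
  by rewrite addrA [x i *: _ + _]addrC subrK.
have [W' W'P] := IH m K' c' (fun l => w l.+1) sys'.
exists (fun l => e *: if l is l'.+1 then W' l' else C - \sum_(0 <= l < n) Al l *: W' l).
move=> i im; rewrite big_nat_recl //=.
have := W'P i im; rewrite sum_scale_comb /c' !(linearZZ f) !(linearB f) !(linearZZ f).
set P := \sum_(0 <= l < n) K i l.+1 *: W' l.
set Q := \sum_(0 <= l < n) Al l *: W' l => W'i.
have -> : \sum_(0 <= l < n) K i l.+1 *: (e *: W' l) = e *: P.
  by rewrite scaler_sumr; apply: eq_bigr => l _; rewrite !scalerA mulrC.
rewrite (linearD f) !(linearZZ f) (linearB f).
have -> : e *: f P = e *: (f P - x i *: f Q) + e *: (x i *: f Q) by rewrite -scalerDr subrK.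
rewrite W'i (scalerA e e) ee !scalerBr !scalerA [K i 0%N * e]mulrC /x.
by rewrite addrACA addNr addr0 addrC subrK.
Qed.

End RegularIdempotent.

Section ForwardPurity.
Variables (R : comPzRingType) (E B C N : lmodType R) (s : R).
Variables (f : {linear E -> B}) (g : {linear B -> C}).
Hypothesis f_ker : forall a, f a = 0 -> s *: a = 0.
Hypothesis g_ker : forall b, g b = 0 -> exists a, f a = s *: b.
Hypothesis gf_zero : forall a, g (s *: f a) = 0.
Hypothesis g_onto : forall c, exists b, g b = s *: c.

Lemma tensor_ker_f (e z : R) (t : seq (E * N)) :
  e * e = e -> (forall x, exists rho, rho * (e * x) ^+ 2 = e * x) -> z * e = z ->
  teq (tmap f t) [::] -> teq (tscale (z * s) t) [::].
Proof.
move=> ee e_reg ze /teq_coef_relations[fam famP coefE].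
set G := undup (map snd t ++ fam_supp fam).
pose d := (0 : B, [::] : seq (R * N)).
pose K i l := seq_coef (nth d fam l).2 (nth 0 G i).
have sys i : (i < size G)%N ->
    \sum_(0 <= l < size fam) K i l *: (nth d fam l).1 = f (seq_coef t (nth 0 G i)).
  move=> _; have := coefE (nth 0 G i).
  by rewrite seq_coef_nil subr0 seq_coef_tmap /fam_coef (big_nth d) => ->.
have [W WP] := linear_system_lift ee e_reg sys.
pose fam' := [seq ((z * s) *: W l, (nth d fam l).2) | l <- iota 0 (size fam)].
have coefE' n : n \in G -> (z * s) *: seq_coef t n = fam_coef fam' n.
  move=> nG; have iG : (index n G < size G)%N by rewrite index_mem.
  have /eqP := WP _ iG; rewrite nth_index // -(linearZZ f) -subr_eq0 -(linearB f).
  move=> /eqP /f_ker /eqP; rewrite scalerBr subr_eq0 => /eqP sWE.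
  transitivity (z *: (s *: (e *: seq_coef t n))).
    by rewrite !scalerA -[z in LHS]ze; congr (_ *: _); ring.
  rewrite -sWE scalerA scaler_sumr /fam_coef big_map.
  rewrite /index_iota subn0; apply: eq_bigr => l _ /=.
  by rewrite /K nth_index // !scalerA mulrC.
have famP' : relation_family fam'.
  by move=> _ /mapP[l /[!mem_iota] /andP[_ lfam] ->]; apply/famP/mem_nth.
have supp' : fam_supp fam' = fam_supp fam.
  rewrite /fam_supp -map_comp -[in RHS](mkseq_nth d fam) /mkseq -map_comp.
  by congr flatten; apply: eq_map.
have uG : uniq G by apply: undup_uniq.
apply: teq_trans (teq_coef uG _) _.
  by move=> n; rewrite map_snd_tscale => nt; rewrite mem_undup mem_cat nt.
have -> : [seq (seq_coef (tscale (z * s) t) n, n) | n <- G] =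
          [seq (fam_coef fam' n, n) | n <- G].
  by apply/eq_in_map => n nG; rewrite seq_coef_tscale coefE'.
by apply: teq_fam_coef_nil => // n; rewrite supp' => nfam; rewrite mem_undup mem_cat nfam orbT.
Qed.

Lemma tensor_ker_g (y : R) (u : seq (B * N)) : teq (tmap g u) [::] ->
  exists t : seq (E * N), teq (tmap f t) (tscale (y * (s * s)) u).
Proof.
move=> /teq_coef_relations[famC famCP coefE].
have [sec secP] := choice g_onto.
pose famB := [seq (sec p.1, p.2) | p <- famC].
have g_famB n : g (fam_coef famB n) = s *: fam_coef famC n.
  rewrite /fam_coef big_map (linear_sum g) scaler_sumr; apply: eq_bigr => p _.
  by rewrite (linearZZ g) secP !scalerA mulrC.
have lift n : exists a, f a = s *: (s *: seq_coef u n - fam_coef famB n).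
  apply: g_ker; rewrite (linearB g) (linearZZ g) g_famB -seq_coef_tmap -coefE.
  by rewrite seq_coef_nil subr0 subrr.
have [a aP] := choice lift.
set G := undup (map snd u ++ fam_supp famB).
have uG : uniq G by apply: undup_uniq.
exists [seq (y *: a n, n) | n <- G].
pose famB' := [seq (- (y * s) *: p.1, p.2) | p <- famB].
have -> : tmap f [seq (y *: a n, n) | n <- G] =
    [seq ((y * (s * s)) *: seq_coef u n + fam_coef famB' n, n) | n <- G].
  rewrite /tmap -map_comp; apply: eq_map => n /=; rewrite (linearZZ f) aP fam_coefZ.
  by rewrite !scalerBr !scalerA scaleNr !mulrA.
apply: teq_trans (teq_mapD _ _ _ _) _.
rewrite -[tscale _ u]cats0; apply: teq_cat.
  under eq_map do rewrite -seq_coef_tscale.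
  apply/teq_sym/teq_coef => // n; rewrite map_snd_tscale => nu.
  by rewrite mem_undup mem_cat nu.
apply: teq_fam_coef_nil => //.
  by apply: relation_familyZ => _ /mapP[p pC ->]; apply: famCP pC.
by move=> n; rewrite fam_suppZ => nfam; rewrite mem_undup mem_cat nfam orbT.
Qed.

Lemma tensor_gf_zero (y : R) (t : seq (E * N)) :
  teq (tmap g (tscale (y * s) (tmap f t))) [::].
Proof.
apply: teq_all_zero => _ /mapP[_ /mapP[_ /mapP[p _ ->] ->] ->] /=.
by rewrite -scalerA (linearZZ g) gf_zero scaler0.
Qed.

Lemma tensor_g_onto (y : R) (w : seq (C * N)) :
  exists u : seq (B * N), teq (tmap g u) (tscale (y * s) w).
Proof.
have [sec secP] := choice g_onto.
exists [seq (y *: sec p.1, p.2) | p <- w]; rewrite /tmap /tscale -map_comp.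
by under eq_map do rewrite /= (linearZZ g) secP scalerA; apply: teq_refl.
Qed.

End ForwardPurity.

Lemma uniformly_vNr_absolutely_pure (R : comPzRingType) (S : {pred R}) :
  multiplicative_subset S -> uniformly_S_vNr S ->
  forall E : lmodType R, uS_absolutely_pure S E.
Proof.
move=> [_ SM] [s sS sreg] E B C f g [s1 s1S [f_ker g_ker gf_zero g_onto]] N.
have [e [ee s3e e_reg]] := uniform_vNr_idempotent sreg.
have s3S : s ^+ 3 \in S by rewrite !exprS expr0 mulr1; apply/SM/SM.
exists (s ^+ 3 * s1 * s1); first by apply/SM/s1S/SM.
split.
- by move=> t; apply: (tensor_ker_f (z := s ^+ 3 * s1) f_ker ee e_reg); rewrite mulrAC s3e.
- by move=> u /(tensor_ker_g g_ker g_onto (s ^+ 3)); rewrite mulrA.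
- by move=> t; apply: tensor_gf_zero.
- by move=> w; apply: tensor_g_onto.
Qed.

Record submod_pred (R : comPzRingType) (M : lmodType R) := SubmodPred {
  smem : M -> Prop;
  smem0 : smem 0;
  smemB : forall x y, smem x -> smem y -> smem (x - y);
  smemZ : forall r x, smem x -> smem (r *: x) }.

Section Quotient.
Variables (R : comPzRingType) (M : lmodType R) (U : submod_pred M).
Local Notation P := (smem U).

Lemma smemN x : P x -> P (- x).
Proof. by move=> Px; rewrite -sub0r; apply: smemB => //; apply: smem0. Qed.

Lemma smemD x y : P x -> P y -> P (x + y).
Proof. by move=> Px Py; rewrite -[y]opprK; apply/smemB/smemN. Qed.

Lemma qcanon_ex (x : M) : exists y, `[< P (x - y) >].
Proof. by exists x; apply/asboolP; rewrite subrr; apply: smem0. Qed.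

Definition qcanon (x : M) : M := xchoose (qcanon_ex x).

Lemma qcanonP x : P (x - qcanon x).
Proof. exact/asboolP/(xchooseP (qcanon_ex x)). Qed.

Lemma qcanon_eq x y : P (x - y) -> qcanon x = qcanon y.
Proof.
move=> Pxy; apply: eq_xchoose => z; apply/asboolP/asboolP => Pz.
  have -> : y - z = (x - z) - (x - y) by rewrite opprB [RHS]addrC addrA subrK.
  exact: smemB.
have -> : x - z = (x - y) + (y - z) by rewrite addrA subrK.
exact: smemD.
Qed.

Lemma qcanon_idem x : qcanon (qcanon x) = qcanon x.
Proof. by apply: qcanon_eq; rewrite -opprB; apply/smemN/qcanonP. Qed.

Record quotmod := QuotMod { qval : M; qvalP : qcanon qval == qval }.
HB.instance Definition _ := [isSub for qval].
HB.instance Definition _ := [Choice of quotmod by <:].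

Definition qpi (x : M) : quotmod := @QuotMod (qcanon x) (introT eqP (qcanon_idem x)).

Lemma qpiK (q : quotmod) : qpi (qval q) = q.
Proof. by apply: val_inj => /=; apply/eqP; case: q. Qed.

Lemma quotmod_ind (Q : quotmod -> Prop) : (forall x, Q (qpi x)) -> forall q, Q q.
Proof. by move=> Qpi q; rewrite -(qpiK q). Qed.

Lemma qpi_eq x y : qpi x = qpi y <-> P (x - y).
Proof.
split=> [/(congr1 qval) /= cxy|]; last by move=> Pxy; apply/val_inj/qcanon_eq.
have -> : x - y = (x - qcanon x) - (y - qcanon y) by rewrite cxy opprB addrA subrK.
by apply/smemB/qcanonP/qcanonP.
Qed.

Lemma qvalE x : P (qval (qpi x) - x).
Proof. by rewrite /= -opprB; apply/smemN/qcanonP. Qed.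

Definition qadd (u v : quotmod) := qpi (qval u + qval v).
Definition qopp (u : quotmod) := qpi (- qval u).
Definition qscale (r : R) (u : quotmod) := qpi (r *: qval u).

Lemma qaddE x y : qadd (qpi x) (qpi y) = qpi (x + y).
Proof. by apply/qpi_eq; rewrite opprD addrACA; apply/smemD/qvalE/qvalE. Qed.

Lemma qoppE x : qopp (qpi x) = qpi (- x).
Proof. by apply/qpi_eq; rewrite -opprD; apply/smemN/qvalE. Qed.

Lemma qscaleE r x : qscale r (qpi x) = qpi (r *: x).
Proof. by apply/qpi_eq; rewrite -scalerBr; apply/smemZ/qvalE. Qed.

Lemma qaddA : associative qadd.
Proof.
by elim/quotmod_ind => x; elim/quotmod_ind => y; elim/quotmod_ind => z; rewrite !qaddE addrA.
Qed.

Lemma qaddC : commutative qadd.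
Proof. by elim/quotmod_ind => x; elim/quotmod_ind => y; rewrite !qaddE addrC. Qed.

Lemma qadd0 : left_id (qpi 0) qadd.
Proof. by elim/quotmod_ind => x; rewrite qaddE add0r. Qed.

Lemma qaddN : left_inverse (qpi 0) qopp qadd.
Proof. by elim/quotmod_ind => x; rewrite qoppE qaddE addNr. Qed.

HB.instance Definition _ := GRing.isZmodule.Build quotmod qaddA qaddC qadd0 qaddN.

Lemma qpiD x y : qpi x + qpi y = qpi (x + y).
Proof. exact: qaddE. Qed.

Lemma qscaleA a b (u : quotmod) : qscale a (qscale b u) = qscale (a * b) u.
Proof. by elim/quotmod_ind: u => x; rewrite !qscaleE scalerA. Qed.

Lemma qscale1 : left_id 1 qscale.
Proof. by elim/quotmod_ind => x; rewrite qscaleE scale1r. Qed.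

Lemma qscaleDr : right_distributive qscale +%R.
Proof.
move=> r; elim/quotmod_ind => x; elim/quotmod_ind => y.
by rewrite qpiD !qscaleE qpiD scalerDr.
Qed.

Lemma qscaleDl (u : quotmod) : {morph qscale^~ u : a b / a + b}.
Proof. by elim/quotmod_ind: u => x a b; rewrite !qscaleE qpiD scalerDl. Qed.

HB.instance Definition _ :=
  GRing.Zmodule_isLmodule.Build R quotmod qscaleA qscale1 qscaleDr qscaleDl.

Lemma qpiZ r x : r *: qpi x = qpi (r *: x).
Proof. exact: qscaleE. Qed.

Lemma qpi_is_linear : linear qpi.
Proof. by move=> r x y; rewrite qpiZ qpiD. Qed.

HB.instance Definition _ := GRing.isLinear.Build R M quotmod _ qpi qpi_is_linear.

Lemma qpi0 x : qpi x = 0 <-> P x.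
Proof. by rewrite -[0]/(qpi 0) qpi_eq subr0. Qed.

End Quotient.

Section PairingInvariant.
Variables (R : comPzRingType) (A N : lmodType R) (a : R) (lam : A -> R) (mu : N -> R).
Hypothesis lamD : forall x y, lam (x + y) = lam x + lam y.
Hypothesis lamZ : forall r x, lam (r *: x) = r * lam x.
Hypothesis lam_mult : forall x, exists y, lam x = a * y.
Hypothesis muD : forall n n', exists y, mu (n + n') - mu n - mu n' = a * y.
Hypothesis muZ : forall r n, exists y, mu (r *: n) - r * mu n = a * y.

Definition pairing (t : seq (A * N)) : R := \sum_(p <- t) lam p.1 * mu p.2.

Lemma pairing_teq t u : teq t u -> exists r, pairing t - pairing u = a ^+ 2 * r.
Proof.
have lam0 : lam 0 = 0 by rewrite -(scale0r 0) lamZ mul0r.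
elim=> {t u}.
- by move=> t; exists 0; rewrite subrr mulr0.
- by move=> t u _ [r tu]; exists (- r); rewrite -opprB tu mulrN.
- by move=> t u v _ [r1 tu] _ [r2 uv]; exists (r1 + r2); rewrite mulrDr -tu -uv addrA subrK.
- move=> t1 t2 u1 u2 _ [r1 tu1] _ [r2 tu2]; exists (r1 + r2).
  by rewrite /pairing !big_cat /= mulrDr -tu1 -tu2 /pairing; ring.
- by move=> t u; exists 0; rewrite /pairing !big_cat /= addrC subrr mulr0.
- by move=> x x' n; exists 0; rewrite /pairing !big_cons !big_nil /= lamD; ring.
- move=> x n n'; have [y xy] := lam_mult x; have [z nz] := muD n n'.
  exists (y * z); rewrite /pairing !big_cons !big_nil /=.
  transitivity (lam x * (mu (n + n') - mu n - mu n')); first by ring.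
  by rewrite xy nz; ring.
- move=> r x n; have [y xy] := lam_mult x; have [z nz] := muZ r n.
  exists (- (y * z)); rewrite /pairing !big_cons !big_nil /= lamZ.
  transitivity (- (lam x * (mu (r *: n) - r * mu n))); first by ring.
  by rewrite xy nz; ring.
- by move=> n; exists 0; rewrite /pairing !big_cons !big_nil /= lam0; ring.
Qed.

End PairingInvariant.

(* E := R^R / annihilator_pred is prod_b bR (through diag_mul), C := R^R / multiple_pred
   is prod_b R/bR. *)
Section DiagonalSequence.
Variable R : comPzRingType.
Local Notation F := (R -> R^o).

Definition annihilator_pred : submod_pred F.
Proof.
refine (@SubmodPred R F (fun x => forall b, b * x b = 0) _ _ _).
- by move=> b; rewrite mulr0.
- by move=> x y x0 y0 b; rewrite mulrBr x0 y0 subrr.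
- by move=> r x x0 b; rewrite mulrCA x0 mulr0.
Defined.

Definition multiple_pred : submod_pred F.
Proof.
refine (@SubmodPred R F (fun x => forall b, exists y, x b = b * y) _ _ _).
- by move=> b; exists 0; rewrite mulr0.
- move=> x x' xm x'm b; have [y xy] := xm b; have [y' x'y'] := x'm b.
  by exists (y - y'); rewrite mulrBr -xy -x'y'.
- by move=> r x xm b; have [y xy] := xm b; exists (r * y); rewrite mulrCA -xy.
Defined.

Local Notation E := (quotmod annihilator_pred).
Local Notation C := (quotmod multiple_pred).

Lemma qval_annihilator (x : F) b : b * qval (qpi annihilator_pred x) b = b * x b.
Proof. by have /eqP := qvalE annihilator_pred x b; rewrite mulrBr subr_eq0 => /eqP. Qed.

Lemma qval_multiple (x : F) b : exists y, qval (qpi multiple_pred x) b = x b + b * y.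
Proof. by have [y xy] := qvalE multiple_pred x b; exists y; rewrite -xy addrC subrK. Qed.

Definition diag_mul (q : E) : F := fun b => b * qval q b.

Lemma diag_mul_qpi (x : F) : diag_mul (qpi annihilator_pred x) = fun b => b * x b.
Proof. by apply/funext => b; apply: qval_annihilator. Qed.

Lemma diag_mul_is_linear : linear diag_mul.
Proof.
move=> r; elim/quotmod_ind => x; elim/quotmod_ind => y.
by rewrite qpiZ qpiD !diag_mul_qpi; apply/funext => b /=; rewrite mulrDr mulrCA.
Qed.

HB.instance Definition _ := GRing.isLinear.Build R E F _ diag_mul diag_mul_is_linear.

Lemma diag_sequence_exact (S : {pred R}) : 1 \in S ->
  uS_exact S (diag_mul : {linear E -> F}) (qpi multiple_pred : {linear F -> C}).
Proof.
move=> S1; exists 1 => //; split.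
- elim/quotmod_ind => x; rewrite /= diag_mul_qpi scale1r => x0; apply/qpi0 => b.
  by have /= := congr1 (fun x => x b) x0.
- move=> x /qpi0 xm; have [y xy] := choice xm.
  by exists (qpi annihilator_pred y); rewrite /= diag_mul_qpi scale1r; apply/funext => b /=.
- by elim/quotmod_ind => x; rewrite scale1r /= diag_mul_qpi; apply/qpi0 => b; exists (x b).
- by move=> c; exists (qval c); rewrite scale1r /= qpiK.
Qed.

Lemma teq_nil_diag_pairing (a : R) (t : seq (E * C)) : teq t [::] ->
  exists r, \sum_(p <- t) a * qval p.1 a * qval p.2 a = a ^+ 2 * r.
Proof.
pose lam (x : E) := a * qval x a; pose mu (n : C) := qval n a.
have lamD : forall x y, lam (x + y) = lam x + lam y.
  by elim/quotmod_ind => x; elim/quotmod_ind => y; rewrite qpiD /lam !qval_annihilator mulrDr.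
have lamZ : forall r x, lam (r *: x) = r * lam x.
  by move=> r; elim/quotmod_ind => x; rewrite qpiZ /lam !qval_annihilator mulrCA.
have lam_mult : forall x, exists y, lam x = a * y by move=> x; exists (qval x a).
have muD : forall n n', exists y, mu (n + n') - mu n - mu n' = a * y.
  elim/quotmod_ind => x; elim/quotmod_ind => x'; rewrite qpiD /mu.
  have [y1 ->] := qval_multiple (x + x') a; have [y2 ->] := qval_multiple x a.
  have [y3 ->] := qval_multiple x' a; exists (y1 - y2 - y3).
  by rewrite -[(x + x') a]/(x a + x' a); ring.
have muZ : forall r n, exists y, mu (r *: n) - r * mu n = a * y.
  move=> r; elim/quotmod_ind => x; rewrite qpiZ /mu.
  have [y1 ->] := qval_multiple (r *: x) a; have [y2 ->] := qval_multiple x a.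
  by exists (y1 - r * y2); rewrite -[(r *: x) a]/(r * x a); ring.
move=> /(pairing_teq lamD lamZ lam_mult muD muZ)[r tr]; exists r.
by rewrite -tr /pairing big_nil subr0.
Qed.

End DiagonalSequence.

Lemma absolutely_pure_uniformly_vNr (R : comPzRingType) (S : {pred R}) :
  multiplicative_subset S ->
  (forall E : lmodType R, uS_absolutely_pure S E) -> uniformly_S_vNr S.
Proof.
move=> [S1 _] pure.
have [s sS [s_ker _ _ _]] :=
  pure _ _ _ _ _ (diag_sequence_exact S1) (quotmod (multiple_pred R)).
exists s => // a.
pose delta : R -> R^o := fun b => if b == a then 1 else 0.
have delta_vanish : teq (tmap (@diag_mul R)
    [:: (qpi (annihilator_pred R) delta, qpi (multiple_pred R) delta)]) [::].
  rewrite /tmap /=.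
  have -> : diag_mul (qpi (annihilator_pred R) delta) = a *: delta.
    rewrite diag_mul_qpi; apply/funext => b; rewrite -[(a *: delta) b]/(a * delta b) /delta.
    by case: eqP => [->|_]; rewrite ?mulr0.
  apply: teq_trans (teq_scale _ _ _) _.
  suff -> : a *: qpi (multiple_pred R) delta = 0 by apply: teq_zeror.
  rewrite qpiZ; apply/qpi0 => b; rewrite -[(a *: delta) b]/(a * delta b) /delta.
  by case: eqP => [->|_]; [exists 1 | exists 0]; rewrite ?mulr1 ?mulr0.
have := s_ker _ delta_vanish; rewrite /tscale /= => /(teq_nil_diag_pairing a)[r].
rewrite big_seq1 qpiZ qval_annihilator -[(s *: delta) a]/(s * delta a).
have [y ->] := qval_multiple delta a; rewrite /delta eqxx => sr; exists (r - s * y).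
by rewrite mulrBl -[r * _]mulrC -sr; ring.
Qed.

Theorem theorem3p5 (R : comPzRingType) (S : {pred R}) :
  multiplicative_subset S ->
  (uniformly_S_vNr S <-> forall E : lmodType R, uS_absolutely_pure S E).
Proof.
move=> S_mult; split; first exact: uniformly_vNr_absolutely_pure.
exact: absolutely_pure_uniformly_vNr.
Qed.
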